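(* For every integer $n$ there is an isomorphism of $\mathcal{A}(\mathbb{CP}^1_q)$-bimodules $$\Phi_{(n)}:\ \mathcal{L}_n\otimes_{\mathcal{A}(\mathbb{CP}^1_q)}\Omega^{(0,1)}(\mathbb{CP}^1_q)\ \xrightarrow{\ \sim\ }\ \Omega^{(0,1)}(\mathbb{CP}^1_q)\otimes_{\mathcal{A}(\mathbb{CP}^1_q)}\mathcal{L}_n,$$ and likewise an isomorphism of $\mathcal{A}(\mathbb{CP}^1_q)$-bimodules $\mathcal{L}_n\otimes_{\mathcal{A}(\mathbb{CP}^1_q)}\Omega^{(1,0)}(\mathbb{CP}^1_q)\simeq\Omega^{(1,0)}(\mathbb{CP}^1_q)\otimes_{\mathcal{A}(\mathbb{CP}^1_q)}\mathcal{L}_n$.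
   Context: Fix $0<q<1$. Let $\mathcal{A}(SU_q(2))$ be the unital complex $*$-algebra generated by $a,c$ subject to $ac=qca$, $ac^*=qc^*a$, $cc^*=c^*c$, $a^*a+c^*c=aa^*+q^2cc^*=1$. Let $K$ be the algebra automorphism... more precisely, $U_q(su(2))$ (generated by $K^{\pm1},E,F$ with $KE=qEK$, $KF=q^{-1}FK$, $EF-FE=(K^2-K^{-2})/(q-q^{-1})$, $\Delta K=K\otimes K$) acts on $\mathcal{A}(SU_q(2))$ making it a left module algebra, with $K\triangleright a=q^{-1/2}a$, $K\triangleright c=q^{-1/2}c$, $K\triangleright a^*=q^{1/2}a^*$, $K\triangleright c^*=q^{1/2}c^*$ (so $K$ acts by an algebra automorphism). For $n\in\mathbb{Z}$ let $\mathcal{L}_n=\{x\in\mathcal{A}(SU_q(2)):K\triangleright x=q^{n/2}x\}$ and $\mathcal{A}(\mathbb{CP}^1_q):=\mathcal{L}_0$; each $\mathcal{L}_n$ is an $\mathcal{A}(\mathbb{CP}^1_q)$-bimodule. Let $\Omega^1(SU_q(2))$ be the $\mathcal{A}(SU_q(2))$-bimodule which is free as a left module with basis $\omega_+,\omega_-,\omega_z$, with right multiplication determined by $\omega_\pm x=q^kx\omega_\pm$ and $\omega_zx=q^{2k}x\omega_z$ for $x\in\mathcal{L}_k$. Define the $\mathcal{A}(\mathbb{CP}^1_q)$-sub-bimodules $\Omega^{(0,1)}(\mathbb{CP}^1_q):=\mathcal{L}_{-2}\,\omega_-$ and $\Omega^{(1,0)}(\mathbb{CP}^1_q):=\mathcal{L}_{2}\,\omega_+$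 of $\Omega^1(SU_q(2))$. *)

From HB Require Import structures.
From mathcomp Require Import all_boot all_order all_algebra.
From mathcomp Require Import reals complex.
Set Implicit Arguments. Unset Strict Implicit. Unset Printing Implicit Defensive.
Import Order.TTheory GRing.Theory Num.Theory.
Local Open Scope ring_scope.

Definition alg_hom (K : comNzRingType) (A B : lalgType K) (f : A -> B) : Prop :=
  [/\ (forall x y, f (x + y) = f x + f y),
      (forall (k : K) x, f (k *: x) = k *: f x),
      (forall x y, f (x * y) = f x * f y) & f 1 = 1].

(* Generators a, c and their adjoints as, cs (standing for a^*, c^* ).
   The defining relations of the star-algebra, together with their adjoints
   (q is real, so conj q = q):
     ac = q ca,  ac^* = q c^*a,  cc^* = c^*c,  a^*a + c^*c = 1,  aa^* + q^2 cc^* = 1,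
     c^*a^* = q a^*c^*   (adjoint of ac = q ca),
     ca^*  = q a^*c    (adjoint of ac^* = q c^*a).                                *)
Definition SUq2_rels (K : comNzRingType) (q : K) (A : lalgType K)
    (a as_ c cs : A) : Prop :=
  [/\ a * c = q *: (c * a),
      a * cs = q *: (cs * a),
      c * cs = cs * c,
      as_ * a + cs * c = 1 &
      [/\ a * as_ + q ^+ 2 *: (c * cs) = 1,
          cs * as_ = q *: (as_ * cs) &
          c * as_ = q *: (as_ * c)]].

Definition SUq2_universal (K : comNzRingType) (q : K) (A : algType K)
    (a as_ c cs : A) : Prop :=
  forall (B : algType K) (a' as' c' cs' : B),
    SUq2_rels q a' as' c' cs' ->
    exists! f : A -> B,
      [/\ alg_hom f, f a = a', f as_ = as', f c = c' & f cs = cs'].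

(* The action of K in U_q(su(2)): an algebra automorphism with
   K>a = q^{-1/2} a, K>c = q^{-1/2} c, K>a* = q^{1/2} a*, K>c* = q^{1/2} c*.
   qh stands for q^{1/2}. *)
Definition K_action (K : comUnitRingType) (qh : K) (A : algType K)
    (a as_ c cs : A) (Kop : A -> A) : Prop :=
  [/\ alg_hom Kop, bijective Kop,
      Kop a = qh^-1 *: a /\ Kop c = qh^-1 *: c,
      Kop as_ = qh *: as_ & Kop cs = qh *: cs].

Definition Lsp (K : comUnitRingType) (qh : K) (A : algType K) (Kop : A -> A)
    (n : int) (x : A) : Prop :=
  Kop x = qh ^ n *: x.

(* Bimodules, given concretely: a subset (bm_mem) of an ambient additive
   group (bm_car), with a left action bm_l and a right action bm_r by
   elements of an ambient ring (only used for elements of the base ring). *)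
Record bimod (A : Type) := BiMod {
  bm_car : zmodType;
  bm_mem : bm_car -> Prop;
  bm_l : A -> bm_car -> bm_car;
  bm_r : bm_car -> A -> bm_car }.
Arguments bm_car {A} b.
Arguments bm_mem {A} b _.
Arguments bm_l {A} b _ _.
Arguments bm_r {A} b _ _.

Definition Lbim (K : comUnitRingType) (qh : K) (A : algType K) (Kop : A -> A)
    (n : int) : bimod A :=
  @BiMod A A (Lsp qh Kop n) (fun b x => b * x) (fun x b => x * b).

(* Omega^1(SU_q(2)): free left A-module with basis w+, w-, wz; an element
   x+ w+ + x- w- + xz wz is the triple ((x+, x-), xz).  Left multiplication
   is coordinatewise; right multiplication by a homogeneous x in L_k is
   given by  w± x = q^k x w±,  wz x = q^{2k} x wz. *)
Definition Om1_lmul (A : nzRingType) (b : A) (w : (A * A * A)%type)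
  : (A * A * A)%type :=
  ((b * w.1.1, b * w.1.2), b * w.2).

Definition Om1_rmul_hom (K : comUnitRingType) (q : K) (A : algType K) (k : int)
    (w : (A * A * A)%type) (x : A) : (A * A * A)%type :=
  ((w.1.1 * (q ^ k *: x), w.1.2 * (q ^ k *: x)), w.2 * (q ^ (2 * k) *: x)).

(* Omega^{(0,1)}(CP^1_q) = L_{-2} w-   and   Omega^{(1,0)}(CP^1_q) = L_2 w+,
   as A(CP^1_q)-sub-bimodules of Omega^1(SU_q(2)); A(CP^1_q) = L_0, so
   the right action is the one of homogeneous elements of degree 0. *)
Definition Om01 (K : comUnitRingType) (q qh : K) (A : algType K) (Kop : A -> A)
  : bimod A :=
  @BiMod A (A * A * A)%type
    (fun w => [/\ w.1.1 = 0, w.2 = 0 & Lsp qh Kop (-2) w.1.2])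
    (@Om1_lmul A) (fun w b => Om1_rmul_hom q 0 w b).

Definition Om10 (K : comUnitRingType) (q qh : K) (A : algType K) (Kop : A -> A)
  : bimod A :=
  @BiMod A (A * A * A)%type
    (fun w => [/\ w.1.2 = 0, w.2 = 0 & Lsp qh Kop 2 w.1.1])
    (@Om1_lmul A) (fun w b => Om1_rmul_hom q 0 w b).

Definition biadd_bal (A : Type) (Bs : A -> Prop) (M N : bimod A) (G : zmodType)
    (f : bm_car M -> bm_car N -> G) : Prop :=
  [/\ (forall x x' y, bm_mem M x -> bm_mem M x' -> bm_mem N y ->
          f (x + x') y = f x y + f x' y),
      (forall x y y', bm_mem M x -> bm_mem N y -> bm_mem N y' ->
          f x (y + y') = f x y + f x y') &
      (forall b x y, Bs b -> bm_mem M x -> bm_mem N y ->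
          f (bm_r M x b) y = f x (bm_l N b y))].

Definition is_tensor (A : Type) (Bs : A -> Prop) (M N : bimod A)
    (T : zmodType) (lT : A -> T -> T) (rT : T -> A -> T)
    (beta : bm_car M -> bm_car N -> T) : Prop :=
  [/\ biadd_bal Bs beta,
      (forall b x y, Bs b -> bm_mem M x -> bm_mem N y ->
          lT b (beta x y) = beta (bm_l M b x) y),
      (forall b x y, Bs b -> bm_mem M x -> bm_mem N y ->
          rT (beta x y) b = beta x (bm_r N y b)),
      (forall b t t', Bs b -> lT b (t + t') = lT b t + lT b t'
                             /\ rT (t + t') b = rT t b + rT t' b) &
      (forall (G : zmodType) (f : bm_car M -> bm_car N -> G),
          biadd_bal Bs f ->
          exists! g : T -> G,
            (forall t t', g (t + t') = g t + g t') /\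
            (forall x y, bm_mem M x -> bm_mem N y -> g (beta x y) = f x y))].

Definition bimod_iso (A : Type) (Bs : A -> Prop)
    (T1 : zmodType) (l1 : A -> T1 -> T1) (r1 : T1 -> A -> T1)
    (T2 : zmodType) (l2 : A -> T2 -> T2) (r2 : T2 -> A -> T2)
    (Phi : T1 -> T2) : Prop :=
  [/\ (forall t t', Phi (t + t') = Phi t + Phi t'),
      bijective Phi,
      (forall b t, Bs b -> Phi (l1 b t) = l2 b (Phi t)) &
      (forall b t, Bs b -> Phi (r1 t b) = r2 (Phi t) b)].

(* "M (x)_Bs N and N (x)_Bs M are isomorphic as Bs-bimodules": any tensor
   product of M and N is isomorphic to any tensor product of N and M. *)
Definition tensor_swap_iso (A : Type) (Bs : A -> Prop) (M N : bimod A) : Prop :=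
  forall (T1 : zmodType) (l1 : A -> T1 -> T1) (r1 : T1 -> A -> T1)
         (beta1 : bm_car M -> bm_car N -> T1)
         (T2 : zmodType) (l2 : A -> T2 -> T2) (r2 : T2 -> A -> T2)
         (beta2 : bm_car N -> bm_car M -> T2),
    is_tensor Bs l1 r1 beta1 -> is_tensor Bs l2 r2 beta2 ->
    exists Phi : T1 -> T2, bimod_iso Bs l1 r1 l2 r2 Phi.

From HB Require Import structures.
From mathcomp Require Import all_boot all_order all_algebra.
From mathcomp Require Import reals complex.
From mathcomp Require Import zify.
Set Implicit Arguments. Unset Strict Implicit. Unset Printing Implicit Defensive.
Import Order.TTheory GRing.Theory Num.Theory.
Local Open Scope ring_scope.

(* A(SU_q(2)) is strongly graded by the eigenvalues of K: the relations
   a a^* + q^2 c c^* = 1 and a^* a + c^* c = 1 express 1 through products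
   L_{-1} L_1 and L_1 L_{-1}, and multiplying such expressions gives, for every k,
   1 = Σ_i u_i v_i with u_i ∈ L_{-k}, v_i ∈ L_k.  Hence for L_0-bimodules P ≅ L_k
   and Q ≅ L_l, multiplication P ⊗_{L_0} Q -> L_{k+l} is a bimodule isomorphism
   with inverse z ↦ Σ_i z u_i ⊗ v_i (v_i ∈ L_l).  Since Ω^{(0,1)} ≅ L_{-2} and
   Ω^{(1,0)} ≅ L_2, both L_n ⊗ Ω and Ω ⊗ L_n are isomorphic to L_{n-2}
   (resp. L_{n+2}). *)

Definition additive_on (U V : zmodType) (D : U -> Prop) (f : U -> V) : Prop :=
  forall x y, D x -> D y -> f (x + y) = f x + f y.

Lemma additive_on0 (U V : zmodType) (D : U -> Prop) (f : U -> V) :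
  D 0 -> additive_on D f -> f 0 = 0.
Proof. by move=> D0 fD; apply: (@addrI _ (f 0)); rewrite -fD ?addr0. Qed.

Lemma additive0 (U V : zmodType) (f : U -> V) : {morph f : x y / x + y} -> f 0 = 0.
Proof. by move=> fD; apply: (@additive_on0 _ _ (fun=> True)). Qed.

Lemma big_morph_on (U V : zmodType) (D : U -> Prop) (f : U -> V)
    (I : finType) (F : I -> U) :
  D 0 -> (forall x y, D x -> D y -> D (x + y)) -> additive_on D f ->
  (forall i, D (F i)) -> f (\sum_i F i) = \sum_i f (F i).
Proof.
move=> D0 DD fD DF.
pose Rf x y := D x /\ f x = y.
suff [] : Rf (\sum_i F i) (\sum_i f (F i)) by [].
apply: (big_ind2 Rf) => [|x x' y y' [Dx <-] [Dy <-]|i _].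
- by split; last exact: additive_on0 fD.
- by split; [exact: DD | exact: fD].
- by [].
Qed.

Lemma tensor_ext (X : Type) (Bs : X -> Prop) (M N : bimod X) (T : zmodType)
    (lT : X -> T -> T) (rT : T -> X -> T) (beta : bm_car M -> bm_car N -> T)
    (G : zmodType) (g g' : T -> G) :
  is_tensor Bs lT rT beta ->
  {morph g : t t' / t + t'} -> {morph g' : t t' / t + t'} ->
  (forall x y, bm_mem M x -> bm_mem N y -> g (beta x y) = g' (beta x y)) ->
  g =1 g'.
Proof.
move=> [[bD1 bD2 bB] _ _ _ bU] gD g'D gE t.
have gbal : biadd_bal Bs (fun x y => g (beta x y)).
  by split=> *; rewrite ?bD1 ?bD2 ?bB ?gD.
have [h [_ hU]] := bU _ _ gbal.
by rewrite -(hU g) ?(hU g') //; split=> // x y Mx Ny; rewrite gE.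
Qed.

Section Grading.
Variables (K : fieldType) (qh : K) (A : algType K) (Kop : A -> A).
Hypotheses (qh_neq0 : qh != 0) (Kop_hom : alg_hom Kop).
Local Notation L := (Lsp qh Kop).

Lemma Lsp0 k : L k 0.
Proof.
case: Kop_hom => KD _ _ _; rewrite /Lsp scaler0.
by apply: (@additive0 _ _ Kop) => x y; rewrite KD.
Qed.

Lemma LspD k x y : L k x -> L k y -> L k (x + y).
Proof. by case: Kop_hom => KD _ _ _; rewrite /Lsp KD => -> ->; rewrite scalerDr. Qed.

Lemma Lsp1 : L 0 1.
Proof. by case: Kop_hom => _ _ _ K1; rewrite /Lsp K1 expr0z scale1r. Qed.

Lemma LspM k l r x y : k + l = r -> L k x -> L l y -> L r (x * y).
Proof.
case: Kop_hom => _ _ KM _ <-; rewrite /Lsp KM => -> ->.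
by rewrite -scalerAl -scalerAr scalerA expfzDr.
Qed.

Definition strong_degree (k : int) : Prop :=
  exists (I : finType) (u v : I -> A),
    (forall i, L (- k) (u i) /\ L k (v i)) /\ \sum_i u i * v i = 1.

Lemma strong_degree0 : strong_degree 0.
Proof.
exists 'I_1, (fun=> 1), (fun=> 1); split; first by rewrite oppr0; split; apply: Lsp1.
by rewrite big_ord1 mulr1.
Qed.

Lemma strong_degreeD k l : strong_degree k -> strong_degree l -> strong_degree (k + l).
Proof.
move=> [I [u [v [uv uv1]]]] [J [u' [v' [uv' uv1']]]].
exists (I * J)%type, (fun p => u p.1 * u' p.2), (fun p => v' p.2 * v p.1); split.
  move=> [i j] /=; have [ui vi] := uv i; have [uj vj] := uv' j.
  by split; [apply: (LspM _ ui uj) | apply: (LspM _ vj vi)]; lia.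
rewrite -(pair_bigA _ (fun i j => u i * u' j * (v' j * v i))) /= -uv1.
apply: eq_bigr => i _.
under eq_bigr do rewrite mulrA -(mulrA (u i)).
by rewrite -mulr_suml -mulr_sumr uv1' mulr1.
Qed.

Lemma strong_degree_all :
  strong_degree 1 -> strong_degree (-1) -> forall k, strong_degree k.
Proof.
move=> s1 sN1.
have sn (n : nat) : strong_degree n /\ strong_degree (- n%:Z).
  elim: n => [|n [IHp IHn]]; first by rewrite oppr0; split; apply: strong_degree0.
  by rewrite intS opprD; split; apply: strong_degreeD.
by case=> n; [case: (sn n) | rewrite NegzE; case: (sn n.+1)].
Qed.

(* [P] is identified with [L_k] through [io] and [pr], as [L_{-2} ω_-] is with
   [L_{-2}]: a degree-0 element commutes with [ω_-] since [q^0 = 1]. *)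
Definition L_copy (P : bimod A) (k : int) (io : A -> bm_car P) (pr : bm_car P -> A)
    : Prop :=
  [/\ forall w, bm_mem P w <-> L k (pr w) /\ io (pr w) = w,
      cancel io pr, {morph io : z z' / z + z'},
      forall b z, bm_l P b (io z) = io (b * z) &
      forall z b, bm_r P (io z) b = io (z * b)].
Arguments L_copy : clear implicits.

Lemma Lbim_copy n : L_copy (Lbim qh Kop n) n id id.
Proof. by split=> // w; split=> [|[]]. Qed.

Section Copy.
Variables (P : bimod A) (k : int) (io : A -> bm_car P) (pr : bm_car P -> A).
Hypothesis Pcopy : L_copy P k io pr.

Lemma copy_mem z : L k z -> bm_mem P (io z).
Proof. by case: Pcopy => memE ioK _ _ _ Lz; apply/memE; rewrite ioK. Qed.

Lemma copy_deg w : bm_mem P w -> L k (pr w).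
Proof. by case: Pcopy => memE _ _ _ _ /memE[]. Qed.

Lemma copy_prK w : bm_mem P w -> io (pr w) = w.
Proof. by case: Pcopy => memE _ _ _ _ /memE[]. Qed.

Lemma copy_prD w w' : bm_mem P w -> bm_mem P w' -> pr (w + w') = pr w + pr w'.
Proof.
case: Pcopy => _ ioK ioD _ _ Pw Pw'.
by rewrite -(copy_prK Pw) -(copy_prK Pw') -ioD !ioK.
Qed.

Lemma copy_prl b w : bm_mem P w -> pr (bm_l P b w) = b * pr w.
Proof. by case: Pcopy => _ ioK _ ioL _ /copy_prK <-; rewrite ioL !ioK. Qed.

Lemma copy_prr b w : bm_mem P w -> pr (bm_r P w b) = pr w * b.
Proof. by case: Pcopy => _ ioK _ _ ioR /copy_prK <-; rewrite ioR !ioK. Qed.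

Lemma copy_lmem b w : L 0 b -> bm_mem P w -> bm_mem P (bm_l P b w).
Proof.
case: Pcopy => _ _ _ ioL _ Lb Pw; rewrite -(copy_prK Pw) ioL.
by apply: copy_mem; apply: (LspM _ Lb (copy_deg Pw)); rewrite add0r.
Qed.

Lemma copy_rmem b w : L 0 b -> bm_mem P w -> bm_mem P (bm_r P w b).
Proof.
case: Pcopy => _ _ _ _ ioR Lb Pw; rewrite -(copy_prK Pw) ioR.
by apply: copy_mem; apply: (LspM _ (copy_deg Pw) Lb); rewrite addr0.
Qed.

End Copy.

Section Tensor.
Variables (P Q : bimod A) (k l d : int).
Variables (ioP : A -> bm_car P) (prP : bm_car P -> A).
Variables (ioQ : A -> bm_car Q) (prQ : bm_car Q -> A).
Hypotheses (Pcopy : L_copy P k ioP prP) (Qcopy : L_copy Q l ioQ prQ) (kld : k + l = d).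
Variables (T : zmodType) (lT : A -> T -> T) (rT : T -> A -> T).
Variable beta : bm_car P -> bm_car Q -> T.
Hypothesis Ttensor : is_tensor (L 0) lT rT beta.

Lemma copy_mul_deg x y : bm_mem P x -> bm_mem Q y -> L d (prP x * prQ y).
Proof. by move=> Px Qy; apply: LspM kld (copy_deg Pcopy Px) (copy_deg Qcopy Qy). Qed.

Lemma tensor_lift (G : zmodType) (g : A -> G) :
  additive_on (L d) g ->
  exists h : T -> G, {morph h : t t' / t + t'} /\
    forall x y, bm_mem P x -> bm_mem Q y -> h (beta x y) = g (prP x * prQ y).
Proof.
move=> gD; case: Ttensor => _ _ _ _ bU.
have fbal : biadd_bal (L 0) (fun x y => g (prP x * prQ y)).
  split=> [x x' y Px Px' Qy | x y y' Px Qy Qy' | b x y Lb Px Qy].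
  - by rewrite (copy_prD Pcopy) // mulrDl gD //; apply: copy_mul_deg.
  - by rewrite (copy_prD Qcopy) // mulrDr gD //; apply: copy_mul_deg.
  - by rewrite (copy_prr Pcopy) // (copy_prl Qcopy) // mulrA.
by have [h [[hD hE] _]] := bU _ _ fbal; exists h.
Qed.

Lemma tensor_lift_lact (G : zmodType) (lG : A -> G -> G) (h : T -> G) (g : A -> G) b :
  L 0 b -> {morph h : t t' / t + t'} -> {morph lG b : t t' / t + t'} ->
  (forall x y, bm_mem P x -> bm_mem Q y -> h (beta x y) = g (prP x * prQ y)) ->
  (forall z, L d z -> lG b (g z) = g (b * z)) ->
  forall t, h (lT b t) = lG b (h t).
Proof.
move=> Lb hD lGD hE gl; case: (Ttensor) => _ bl _ blr _.
apply: (tensor_ext Ttensor) => [t t'|t t'|x y Px Qy] /=.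
- by rewrite (blr b t t' Lb).1 hD.
- by rewrite hD lGD.
have Pbx := copy_lmem Pcopy Lb Px.
by rewrite bl // !hE // (copy_prl Pcopy) // -mulrA gl //; exact: copy_mul_deg.
Qed.

Lemma tensor_lift_ract (G : zmodType) (rG : G -> A -> G) (h : T -> G) (g : A -> G) b :
  L 0 b -> {morph h : t t' / t + t'} -> {morph rG ^~ b : t t' / t + t'} ->
  (forall x y, bm_mem P x -> bm_mem Q y -> h (beta x y) = g (prP x * prQ y)) ->
  (forall z, L d z -> rG (g z) b = g (z * b)) ->
  forall t, h (rT t b) = rG (h t) b.
Proof.
move=> Lb hD rGD hE gr; case: (Ttensor) => _ _ br blr _.
apply: (tensor_ext Ttensor) => [t t'|t t'|x y Px Qy] /=.
- by rewrite (blr b t t' Lb).2 hD.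
- by rewrite hD rGD.
have Qyb := copy_rmem Qcopy Lb Qy.
by rewrite br // !hE // (copy_prr Qcopy) // mulrA gr //; exact: copy_mul_deg.
Qed.

Section Inverse.
Variables (I : finType) (u v : I -> A).
Hypotheses (uv_deg : forall i, L (- l) (u i) /\ L l (v i)) (uv1 : \sum_i u i * v i = 1).

(* The inverse of the multiplication [P ⊗ Q -> L_d], since [z = Σ_i (z u_i) v_i]. *)
Definition tensor_split z := \sum_i beta (ioP (z * u i)) (ioQ (v i)).

Lemma split_left_deg z i : L d z -> L k (z * u i).
Proof. by move=> Lz; apply: (LspM _ Lz (uv_deg i).1); lia. Qed.

Lemma tensor_splitD : additive_on (L d) tensor_split.
Proof.
move=> z z' Lz Lz'; rewrite /tensor_split -big_split; apply: eq_bigr => i _ /=.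
case: Ttensor => [[bD1 _ _] _ _ _ _]; case: Pcopy => _ _ ioD _ _.
have Qv := copy_mem Qcopy (uv_deg i).2.
by rewrite mulrDl ioD bD1 //; apply: (copy_mem Pcopy); apply: split_left_deg.
Qed.

Lemma tensor_split_mul x y :
  bm_mem P x -> bm_mem Q y -> tensor_split (prP x * prQ y) = beta x y.
Proof.
move=> Px Qy; case: Ttensor => [[_ bD2 bB] _ _ _ _].
case: (Pcopy) => _ _ _ _ ioPr; case: (Qcopy) => _ ioQK ioQD ioQl _.
have Lyu i : L 0 (prQ y * u i).
  by apply: (LspM _ (copy_deg Qcopy Qy) (uv_deg i).1); rewrite addrN.
have Lyuv i : L l (prQ y * u i * v i).
  by apply: (LspM _ (Lyu i) (uv_deg i).2); rewrite add0r.
transitivity (\sum_i beta x (ioQ (prQ y * u i * v i))).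
  apply: eq_bigr => i _.
  have Qv := copy_mem Qcopy (uv_deg i).2.
  by rewrite -mulrA -ioPr (copy_prK Pcopy) // (bB _ _ _ (Lyu i) Px Qv) ioQl.
rewrite -(big_morph_on (D := L l) (f := fun z => beta x (ioQ z))) //.
- by under eq_bigr do rewrite -mulrA; rewrite -mulr_sumr uv1 mulr1 (copy_prK Qcopy).
- exact: Lsp0.
- exact: LspD.
- move=> z z' Lz Lz' /=.
  by rewrite ioQD (bD2 _ _ _ Px (copy_mem Qcopy Lz) (copy_mem Qcopy Lz')).
Qed.

Lemma lift_tensor_split (G : zmodType) (h : T -> G) (g : A -> G) :
  {morph h : t t' / t + t'} -> additive_on (L d) g ->
  (forall x y, bm_mem P x -> bm_mem Q y -> h (beta x y) = g (prP x * prQ y)) ->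
  forall z, L d z -> h (tensor_split z) = g z.
Proof.
move=> hD gD hE z Lz; case: (Pcopy) => _ ioPK _ _ _; case: (Qcopy) => _ ioQK _ _ _.
have Luv i : L 0 (u i * v i) by apply: (LspM _ (uv_deg i).1 (uv_deg i).2); rewrite addNr.
rewrite -[in RHS](mulr1 z) -uv1 mulr_sumr (big_morph_on (D := L d)) //.
- rewrite /tensor_split (big_morph h hD (additive0 hD)); apply: eq_bigr => i _.
  rewrite hE ?ioPK ?ioQK ?mulrA //.
    by apply: (copy_mem Pcopy); apply: split_left_deg.
  exact: (copy_mem Qcopy (uv_deg i).2).
- exact: Lsp0.
- exact: LspD.
- by move=> i; apply: (LspM _ Lz (Luv i)); rewrite addr0.
Qed.

Lemma lact_tensor_split b z :
  L 0 b -> L d z -> lT b (tensor_split z) = tensor_split (b * z).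
Proof.
move=> Lb Lz; case: Ttensor => _ bl _ blr _.
apply: (lift_tensor_split (h := lT b) (g := fun z => tensor_split (b * z))) => //.
- by move=> t t'; rewrite (blr b t t' Lb).1.
- move=> z1 z2 Lz1 Lz2; rewrite mulrDr tensor_splitD //.
    by apply: (LspM _ Lb Lz1); rewrite add0r.
  by apply: (LspM _ Lb Lz2); rewrite add0r.
- move=> x y Px Qy; have Pbx := copy_lmem Pcopy Lb Px.
  by rewrite bl // -tensor_split_mul // (copy_prl Pcopy) // mulrA.
Qed.

Lemma ract_tensor_split b z :
  L 0 b -> L d z -> rT (tensor_split z) b = tensor_split (z * b).
Proof.
move=> Lb Lz; case: Ttensor => _ _ br blr _.
apply: (lift_tensor_split (h := rT ^~ b) (g := fun z => tensor_split (z * b))) => //.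
- by move=> t t'; rewrite (blr b t t' Lb).2.
- move=> z1 z2 Lz1 Lz2; rewrite mulrDl tensor_splitD //.
    by apply: (LspM _ Lz1 Lb); rewrite addr0.
  by apply: (LspM _ Lz2 Lb); rewrite addr0.
- move=> x y Px Qy; have Qyb := copy_rmem Qcopy Lb Qy.
  by rewrite br // -tensor_split_mul // (copy_prr Qcopy) // mulrA.
Qed.

End Inverse.
End Tensor.

Lemma tensor_swap_copies (P Q : bimod A) (k l : int)
    (ioP : A -> bm_car P) (prP : bm_car P -> A)
    (ioQ : A -> bm_car Q) (prQ : bm_car Q -> A) :
  L_copy P k ioP prP -> L_copy Q l ioQ prQ ->
  strong_degree k -> strong_degree l -> tensor_swap_iso (L 0) P Q.
Proof.
move=> Pc Qc [Ik [uk [vk [uvk uvk1]]]] [Il [ul [vl [uvl uvl1]]]].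
move=> T1 l1 r1 b1 T2 l2 r2 b2 T1t T2t.
have lkE : l + k = k + l := addrC l k.
pose split1 := tensor_split ioP ioQ b1 ul vl.
pose split2 := tensor_split ioQ ioP b2 uk vk.
have split1D : additive_on (L (k + l)) split1 := tensor_splitD Pc Qc (erefl _) T1t uvl.
have split2D : additive_on (L (k + l)) split2 := tensor_splitD Qc Pc lkE T2t uvk.
have [Phi [PhiD PhiE]] := tensor_lift Pc Qc (erefl _) T1t split2D.
have [Psi [PsiD PsiE]] := tensor_lift Qc Pc lkE T2t split1D.
have degPQ x y : bm_mem P x -> bm_mem Q y -> L (k + l) (prP x * prQ y).
  exact: (copy_mul_deg Pc Qc (erefl _)).
have degQP y x : bm_mem Q y -> bm_mem P x -> L (k + l) (prQ y * prP x).
  exact: (copy_mul_deg Qc Pc lkE).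
case: (T2t) => _ _ _ blr2 _.
exists Phi; split=> //.
- exists Psi => t.
  + apply: (tensor_ext T1t (g := Psi \o Phi) (g' := id)) => // [? ?|x y Px Qy] /=.
      by rewrite PhiD PsiD.
    rewrite PhiE //.
    rewrite (lift_tensor_split Qc Pc lkE uvk uvk1 PsiD split1D PsiE (degPQ _ _ Px Qy)).
    exact: (tensor_split_mul Pc Qc T1t uvl uvl1).
  + apply: (tensor_ext T2t (g := Phi \o Psi) (g' := id)) => // [? ?|y x Qy Px] /=.
      by rewrite PsiD PhiD.
    rewrite PsiE //.
    rewrite (lift_tensor_split Pc Qc (erefl _) uvl uvl1 PhiD split2D PhiE (degQP _ _ Qy Px)).
    exact: (tensor_split_mul Qc Pc T2t uvk uvk1).
- move=> b t Lb; apply: (tensor_lift_lact Pc Qc (erefl _) T1t Lb PhiD _ PhiE).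
    by move=> ? ?; rewrite (blr2 b _ _ Lb).1.
  by move=> z; apply: (lact_tensor_split Qc Pc lkE T2t uvk uvk1 Lb).
- move=> b t Lb; apply: (tensor_lift_ract Pc Qc (erefl _) T1t Lb PhiD _ PhiE).
    by move=> ? ?; rewrite (blr2 b _ _ Lb).2.
  by move=> z; apply: (ract_tensor_split Qc Pc lkE T2t uvk uvk1 Lb).
Qed.

Lemma Om01_copy (q : K) :
  L_copy (Om01 q qh Kop) (-2) (fun z => ((0, z), 0)) (fun w => w.1.2).
Proof.
split=> [[[x y] z] | z | z z' | b z | z b] //=.
- by split=> [[-> -> Ly] | [Ly [-> <-]]].
- by congr (_, _, _); rewrite addr0.
- by rewrite /Om1_lmul /= !mulr0.
- by rewrite /Om1_rmul_hom /= !mul0r expr0z scale1r.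
Qed.

Lemma Om10_copy (q : K) :
  L_copy (Om10 q qh Kop) 2 (fun z => ((z, 0), 0)) (fun w => w.1.1).
Proof.
split=> [[[x y] z] | z | z z' | b z | z b] //=.
- by split=> [[-> -> Lx] | [Lx [-> <-]]].
- by congr (_, _, _); rewrite addr0.
- by rewrite /Om1_lmul /= !mulr0.
- by rewrite /Om1_rmul_hom /= !mul0r expr0z scale1r.
Qed.

End Grading.

Lemma SUq2_strong_degree (K : fieldType) (q qh : K) (A : algType K)
    (a as_ c cs : A) (Kop : A -> A) :
  qh != 0 -> SUq2_rels q a as_ c cs -> K_action qh a as_ c cs Kop ->
  forall k, strong_degree qh Kop k.
Proof.
move=> qh_neq0 [_ _ _ rel_asa [rel_aas _ _]] [Kop_hom _ [Ka Kc] Kas Kcs].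
have La : Lsp qh Kop (-1) a by rewrite /Lsp exprN1.
have Lc : Lsp qh Kop (-1) (q ^+ 2 *: c).
  by case: Kop_hom => _ KZ _ _; rewrite /Lsp KZ Kc exprN1 !scalerA mulrC.
have Las : Lsp qh Kop 1 as_ by rewrite /Lsp expr1z.
have Lcs : Lsp qh Kop 1 cs by rewrite /Lsp expr1z.
apply: strong_degree_all => //.
- exists bool, (fun i => if i then a else q ^+ 2 *: c), (fun i => if i then as_ else cs).
  by split; [case | rewrite big_bool /= -scalerAl].
- exists bool, (fun i => if i then as_ else cs), (fun i => if i then a else c).
  by split; [case; rewrite opprK | rewrite big_bool].
Qed.

Theorem lemma3p6 (R : realType) (q : R) (hq0 : 0 < q) (hq1 : q < 1)
    (A : algType R[i]) (a as_ c cs : A)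
    (Hrel : SUq2_rels (q%:C)%C a as_ c cs)
    (Huniv : SUq2_universal (q%:C)%C a as_ c cs)
    (Kop : A -> A) (HK : K_action ((Num.sqrt q)%:C)%C a as_ c cs Kop)
    (n : int) :
  tensor_swap_iso (Lsp ((Num.sqrt q)%:C)%C Kop 0)
    (Lbim ((Num.sqrt q)%:C)%C Kop n) (Om01 (q%:C)%C ((Num.sqrt q)%:C)%C Kop)
  /\
  tensor_swap_iso (Lsp ((Num.sqrt q)%:C)%C Kop 0)
    (Lbim ((Num.sqrt q)%:C)%C Kop n) (Om10 (q%:C)%C ((Num.sqrt q)%:C)%C Kop).
Proof.
set qh := ((Num.sqrt q)%:C)%C.
have qh_neq0 : qh != 0.
  by rewrite /qh fmorph_eq0 sqrtr_eq0 -ltNge.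
have Kop_hom : alg_hom Kop by case: HK.
have sd := SUq2_strong_degree qh_neq0 Hrel HK.
split; apply: (tensor_swap_copies qh_neq0 Kop_hom (Lbim_copy qh Kop n)) (sd _) (sd _).
- exact: Om01_copy.
- exact: Om10_copy.
Qed.
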